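(* Let $d\ge1$, let $\zeta=\{\zeta_k\}_{k\in\mathbb{Z}^d}$ be a stationary random field with $\mathrm{E}(\zeta_0)=0$ and $\mathrm{Var}(\zeta_0)<\infty$, and let $\delta>0$. Suppose that for all $\psi_1,\psi_2\in\mathscr{U}$ with $\mathrm{sep}(\mathrm{supp}[\psi_1],\mathrm{supp}[\psi_2])\ge\delta$ the pair $(S_n(\psi_1),S_n(\psi_2))$ is asymptotically independent as $n\to\infty$. Then for every integer $N\ge2$ and all $\varphi_1,\ldots,\varphi_N\in\mathscr{U}$ with $\mathrm{sep}(\mathrm{supp}[\varphi_i],\mathrm{supp}[\varphi_j])\ge\delta$ for all $1\le i\ne j\le N$, the vector $(S_n(\varphi_1),\ldots,S_n(\varphi_N))$ is asymptotically independent as $n\to\infty$.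
   Context: $\mathscr{U}$ is the set of finite linear combinations of indicator functions of boxes $(a_1,b_1]\times\cdots\times(a_d,b_d]\subset\mathbb{R}^d$ with $a_i<b_i$ real; $\mathrm{supp}[\varphi]$ is the support of $\varphi$. For $A,B\subset\mathbb{R}^d$, $\mathrm{sep}(A,B)=\inf\{\max_{1\le i\le d}|x_i-y_i|: x\in A,y\in B\}$. For $\varphi\in\mathscr{U}$, $S_n(\varphi):=n^{-d/2}\sum_{k\in\mathbb{Z}^d}\zeta_k\varphi(k/n)$. A sequence of random vectors $(X_{1,n},\ldots,X_{N,n})$ ($N\ge2$) is asymptotically independent as $n\to\infty$ if for all real $\xi_1,\ldots,\xi_N$, $\lim_{n\to\infty}\big|\mathrm{E}[e^{i\xi_1X_{1,n}+\cdots+i\xi_NX_{N,n}}]-\prod_{j=1}^N\mathrm{E}[e^{i\xi_jX_{j,n}}]\big|=0$. *)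

From HB Require Import structures.
From mathcomp Require Import all_boot all_order all_algebra.
From mathcomp Require Import all_classical all_reals all_analysis.
From mathcomp Require Import complex.
Set Implicit Arguments. Unset Strict Implicit. Unset Printing Implicit Defensive.
Import Order.TTheory GRing.Theory Num.Theory.
Import numFieldNormedType.Exports.
Local Open Scope classical_set_scope.
Local Open Scope ring_scope.

Definition box {R : realType} {d : nat} (a b : 'rV[R]_d) : set 'rV[R]_d :=
  [set x | forall i : 'I_d, a ord0 i < x ord0 i <= b ord0 i].

Definition inU {R : realType} {d : nat} (phi : 'rV[R]_d -> R) : Prop :=
  exists s : seq (R * 'rV[R]_d * 'rV[R]_d),
    (forall t, t \in s -> forall i : 'I_d, t.1.2 ord0 i < t.2 ord0 i) /\
    phi = fun x => \sum_(t <- s) t.1.1 * \1_(box t.1.2 t.2) x.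

Definition supp {R : realType} {d : nat} (phi : 'rV[R]_d -> R) : set 'rV[R]_d :=
  [set x | phi x != 0].

Definition maxdist {R : realType} {d : nat} (x y : 'rV[R]_d) : R :=
  \big[Num.max/0]_(i < d) `|x ord0 i - y ord0 i|.

(** sep(A,B) = inf { max_i |x_i - y_i| : x in A, y in B } (an extended real,
    +oo when A or B is empty). *)
Definition sep {R : realType} {d : nat} (A B : set 'rV[R]_d) : \bar R :=
  ereal_inf [set (maxdist x y)%:E | x in A & y in B].

Definition prod_measurable {R : realType} (m : nat) (A : set ('I_m -> R)) : Prop :=
  <<s [set C | exists (i : 'I_m) (B : set R), measurable B /\ C = [set f | B (f i)]] >> A.

Definition stationary {R : realType} {dT : measure_display} {T : measurableType dT}
  (P : probability T R) {d : nat} (zeta : 'rV[int]_d -> {RV P >-> R}) : Prop :=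
  forall (h : 'rV[int]_d) (m : nat) (s : 'I_m -> 'rV[int]_d) (A : set ('I_m -> R)),
    prod_measurable A ->
    P [set w | A (fun j => zeta (s j + h) w)] = P [set w | A (fun j => zeta (s j) w)].

Definition Sn {R : realType} {dT : measure_display} {T : measurableType dT}
  (P : probability T R) {d : nat} (zeta : 'rV[int]_d -> {RV P >-> R})
  (n : nat) (phi : 'rV[R]_d -> R) : T -> R :=
  fun w => (Num.sqrt (n%:R : R) ^+ d)^-1 *
    \sum_(k \in [set: 'rV[int]_d])
       (zeta k w * phi (\row_(i < d) ((k ord0 i)%:~R / (n%:R : R)))).

(** E[e^{i Y}] = E[cos Y] + i E[sin Y], as a complex number. *)
Definition charE {R : realType} {dT : measure_display} {T : measurableType dT}
  (P : probability T R) (Y : T -> R) : R[i] :=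
  (fine (\int[P]_w (cos (Y w))%:E) +i* fine (\int[P]_w (sin (Y w))%:E))%C.

Definition cmod {R : realType} (z : R[i]) : R :=
  Num.sqrt (complex.Re z ^+ 2 + complex.Im z ^+ 2).

Definition asym_indep {R : realType} {dT : measure_display} {T : measurableType dT}
  (P : probability T R) (N : nat) (X : 'I_N -> nat -> T -> R) : Prop :=
  forall xi : 'I_N -> R,
    (fun n => cmod (charE P (fun w => \sum_(j < N) xi j * X j n w)
                    - \prod_(j < N) charE P (fun w => xi j * X j n w)))
      @ \oo --> (0 : R).

From mathcomp Require Import all_boot all_order all_algebra.
From mathcomp Require Import all_classical all_reals all_analysis.
From mathcomp Require Import complex measurable_realfun.
From mathcomp Require Import lra ring zify.
Import Order.TTheory GRing.Theory Num.Theory.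
Import numFieldNormedType.Exports.
Local Open Scope classical_set_scope.
Local Open Scope ring_scope.

(** Split the combination sum_j xi_j S_n(phi_j) as
    xi_0 S_n(phi_0) + S_n(psi) with psi = sum_(j>0) xi_j phi_j: S_n is linear on
    the class U (for n > 0 only finitely many lattice points k/n meet the
    bounded support of a function of U), psi is again in U, and since
    supp psi is contained in the union of the supp phi_j, it stays at distance
    delta from supp phi_0.  The pairwise hypothesis for (phi_0, psi) splits off
    E e^{i xi_0 S_n(phi_0)}, and the induction hypothesis factors
    E e^{i S_n(psi)}; as characteristic functions are bounded, the two errors
    add up to a quantity that tends to 0. *)

Section Grid.
Context {R : realType} {d : nat}.
Implicit Types (n : nat) (f g : 'rV[R]_d -> R).

Definition grid_point n (k : 'rV[int]_d) : 'rV[R]_d :=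
  \row_(i < d) ((k ord0 i)%:~R / (n%:R : R)).

Definition grid_support n f : set 'rV[int]_d := [set k | f (grid_point n k) != 0].

Definition lincomb {N : nat} (c : 'I_N -> R) (F : 'I_N -> 'rV[R]_d -> R) x : R :=
  \sum_(j < N) c j * F j x.

Lemma lincomb0 (c : 'I_0 -> R) F : lincomb c F = fun=> 0.
Proof. by apply: funext => x; rewrite /lincomb big_ord0. Qed.

Lemma lincombS N (c : 'I_N.+1 -> R) F :
  lincomb c F = fun x => c ord0 * F ord0 x + lincomb (c \o lift ord0) (F \o lift ord0) x.
Proof. by apply: funext => x; rewrite /lincomb big_ord_recl. Qed.

Lemma lincomb_ind (Q : ('rV[R]_d -> R) -> Prop) :
  Q (fun=> 0) ->
  (forall f g, Q f -> Q g -> Q (fun x => f x + g x)) ->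
  (forall c f, Q f -> Q (fun x => c * f x)) ->
  forall N (c : 'I_N -> R) F, (forall j, Q (F j)) -> Q (lincomb c F).
Proof.
move=> Q0 QD QZ; elim=> [|N IH] c F QF; first by rewrite lincomb0.
by rewrite lincombS; apply: QD; [apply: QZ | apply: IH => j; apply: QF].
Qed.

Lemma inU0 : inU (fun _ : 'rV[R]_d => 0 : R).
Proof. by exists [::]; split => //; apply: funext => x; rewrite big_nil. Qed.

Lemma inUD f g : inU f -> inU g -> inU (fun x => f x + g x).
Proof.
move=> [s1 [s1_box ->]] [s2 [s2_box ->]]; exists (s1 ++ s2); split.
  by move=> t; rewrite mem_cat => /orP[/s1_box | /s2_box].
by apply: funext => x; rewrite big_cat.
Qed.

Lemma inUZ c f : inU f -> inU (fun x => c * f x).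
Proof.
move=> [s [s_box ->]]; exists [seq (c * t.1.1, t.1.2, t.2) | t <- s]; split.
  by move=> t /mapP[u /s_box u_box ->].
by apply: funext => x; rewrite big_map mulr_sumr; apply: eq_bigr => t _; rewrite mulrA.
Qed.

Lemma inU_lincomb N (c : 'I_N -> R) F : (forall j, inU (F j)) -> inU (lincomb c F).
Proof. exact: lincomb_ind inU0 inUD inUZ N c F. Qed.

Lemma sep_lincomb N (c : 'I_N -> R) F (phi : 'rV[R]_d -> R) (r : \bar R) :
  (forall j, (r <= sep (supp phi) (supp (F j)))%E) ->
  (r <= sep (supp phi) (supp (lincomb c F)))%E.
Proof.
move=> r_sep; apply/ereal_infP => _ [x phix [y Fy <-]].
have [j Fjy] : exists j, F j y != 0.
  apply: contrapT => /forallNP F0; move: Fy; rewrite /supp /lincomb /= big1 ?eqxx //.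
  by move=> j _; move/negP: (F0 j); rewrite negbK => /eqP ->; rewrite mulr0.
by apply: (ereal_infP (r_sep j)); exists x => //; exists y.
Qed.

Lemma finite_grid_support0 n : finite_set (grid_support n (fun=> 0)).
Proof.
by apply: sub_finite_set (finite_set0 _) => k; rewrite /grid_support /= eqxx.
Qed.

Lemma grid_supportD n f g :
  grid_support n (fun x => f x + g x) `<=` grid_support n f `|` grid_support n g.
Proof.
move=> k; rewrite /grid_support /=.
by have [->|] := eqVneq (f (grid_point n k)) 0; [rewrite add0r; right | left].
Qed.

Lemma finite_grid_supportD n f g : finite_set (grid_support n f) ->
  finite_set (grid_support n g) -> finite_set (grid_support n (fun x => f x + g x)).
Proof.
by move=> finf fing; apply: sub_finite_set (grid_supportD n f g) _; rewrite finite_setU.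
Qed.

Lemma finite_grid_supportZ n c f : finite_set (grid_support n f) ->
  finite_set (grid_support n (fun x => c * f x)).
Proof.
by apply: sub_finite_set => k; rewrite /grid_support /= mulf_eq0 negb_or => /andP[].
Qed.

Lemma finite_grid_support_lincomb n N (c : 'I_N -> R) F :
  (forall j, finite_set (grid_support n (F j))) ->
  finite_set (grid_support n (lincomb c F)).
Proof.
exact: lincomb_ind (finite_grid_support0 n) (@finite_grid_supportD n)
  (@finite_grid_supportZ n) N c F.
Qed.

Lemma finite_int_cube (M : nat) :
  finite_set [set k : 'rV[int]_d | forall i, `|k ord0 i| <= M%:Z].
Proof.
apply: sub_finite_set (finite_image
  (fun m : 'rV['I_(M + M).+1]_d => \row_i ((m ord0 i : nat)%:Z - M%:Z))
  (finite_finset (X := setT))).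
move=> k /= k_cube; exists (\row_i inord (absz (k ord0 i + M%:Z))) => //.
apply/rowP => i; rewrite !mxE.
have := k_cube i; set x := k ord0 i; rewrite ler_norml => /andP[x_ge x_le].
have xM_ge0 : 0 <= x + M%:Z by lia.
rewrite inordK; first by rewrite gez0_abs // addrK.
by rewrite -ltz_nat gez0_abs //; lia.
Qed.

Lemma grid_point_box_bound n (a b : 'rV[R]_d) k : (0 < n)%N ->
  box a b (grid_point n k) ->
  forall i, `|k ord0 i| <= (Num.bound (n%:R * \sum_j (`|a ord0 j| + `|b ord0 j|)))%:Z.
Proof.
move=> n_gt0 k_box i; have := k_box i; rewrite /grid_point mxE => /andP[a_lt le_b].
set B := \sum_j _.
have n_pos : 0 < n%:R :> R by rewrite ltr0n.
have B_ge : `|a ord0 i| + `|b ord0 i| <= B.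
  by rewrite /B (bigD1 i) //= lerDl sumr_ge0 // => j _; rewrite addr_ge0.
have kn_le : `|(k ord0 i)%:~R / n%:R| <= B :> R.
  apply: le_trans B_ge; rewrite ler_norml.
  have := ler_norm (a ord0 i); have := ler_norm (- a ord0 i).
  have := ler_norm (b ord0 i); have := ler_norm (- b ord0 i).
  rewrite !normrN => *; apply/andP; split; lra.
have k_le : `|(k ord0 i)%:~R| <= n%:R * B :> R.
  by rewrite -ler_pdivrMl // -(ger0_norm (ltW n_pos)) -normfV -normrM mulrC.
suff : (`|k ord0 i|)%:~R < ((Num.bound (n%:R * B))%:Z)%:~R :> R.
  by rewrite ltr_int => /ltW.
rewrite intr_norm -pmulrn.
exact: le_lt_trans k_le (archi_boundP (le_trans (normr_ge0 _) k_le)).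
Qed.

Lemma finite_grid_support_box n (a b : 'rV[R]_d) : (0 < n)%N ->
  finite_set (grid_support n (\1_(box a b))).
Proof.
move=> n_gt0.
apply: (sub_finite_set _
  (finite_int_cube (Num.bound (n%:R * \sum_j (`|a ord0 j| + `|b ord0 j|))))) => k.
rewrite /grid_support /= indicE.
case: (boolP (grid_point n k \in box a b)) => [/set_mem k_box _ | _].
  exact: grid_point_box_bound.
by rewrite eqxx.
Qed.

Lemma finite_grid_support_inU n f :
  (0 < n)%N -> inU f -> finite_set (grid_support n f).
Proof.
move=> n_gt0 [s [_ ->]]; elim: s => [|t s IH].
  apply: sub_finite_set (finite_grid_support0 n) => k.
  by rewrite /grid_support /= big_nil.
under eq_fun do rewrite big_cons.
exact/finite_grid_supportD/IH/finite_grid_supportZ/finite_grid_support_box.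
Qed.

End Grid.

Section PartialSums.
Context {R : realType} {dT : measure_display} {T : measurableType dT}.
Context {P : probability T R}.
Context {d : nat} (zeta : 'rV[int]_d -> {RV P >-> R}).
Implicit Types (n : nat) (f g : 'rV[R]_d -> R).

Lemma Sn_fsbig n f (K : set 'rV[int]_d) : grid_support n f `<=` K ->
  Sn zeta n f = fun w =>
    (Num.sqrt (n%:R : R) ^+ d)^-1 * \sum_(k \in K) zeta k w * f (grid_point n k).
Proof.
move=> fK; apply: funext => w; rewrite /Sn; congr (_ * _).
rewrite -(fsbig_widen K setT) // => k [_ nKk].
have /negP : ~ grid_support n f k by move/fK.
by rewrite negbK => /eqP /= ->; rewrite mulr0.
Qed.

Lemma SnD n f g : finite_set (grid_support n f) -> finite_set (grid_support n g) ->
  Sn zeta n (fun x => f x + g x) = fun w => Sn zeta n f w + Sn zeta n g w.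
Proof.
move=> finf fing; set K := grid_support n f `|` grid_support n g.
have finK : finite_set K by rewrite finite_setU.
rewrite (Sn_fsbig _ _ _ (grid_supportD n f g)).
rewrite (Sn_fsbig _ _ K (@subsetUl _ _ _)) (Sn_fsbig _ _ K (@subsetUr _ _ _)).
apply: funext => w; rewrite -mulrDr -fsbig_split //.
by congr (_ * _); apply: eq_fsbigr => k _; rewrite mulrDr.
Qed.

Lemma SnZ n c f : Sn zeta n (fun x => c * f x) = fun w => c * Sn zeta n f w.
Proof.
apply: funext => w; rewrite /Sn mulrCA; congr (_ * _).
by rewrite mulr_fsumr; apply: eq_fsbigr => k _; rewrite mulrCA.
Qed.

Lemma Sn0 n : Sn zeta n (fun=> 0) = fun=> 0.
Proof. by apply: funext => w; rewrite /Sn fsbig1 ?mulr0 // => k _; rewrite mulr0. Qed.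

Lemma Sn_lincomb n N (c : 'I_N -> R) F :
  (forall j, finite_set (grid_support n (F j))) ->
  Sn zeta n (lincomb c F) = fun w => \sum_(j < N) c j * Sn zeta n (F j) w.
Proof.
elim: N c F => [|N IH] c F finF.
  by rewrite lincomb0 Sn0; apply: funext => w; rewrite big_ord0.
rewrite lincombS SnD; last 2 first.
- exact: finite_grid_supportZ.
- by apply: finite_grid_support_lincomb => j; apply: finF.
rewrite SnZ IH => [|j]; last exact: finF.
by apply: funext => w; rewrite big_ord_recl.
Qed.

Lemma measurable_Sn n f :
  finite_set (grid_support n f) -> measurable_fun setT (Sn zeta n f).
Proof.
move=> finf; rewrite (Sn_fsbig _ _ _ (@subset_refl _ (grid_support n f))).
apply: measurable_funM => //; under eq_fun do rewrite fsbig_finite //.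
by apply: measurable_sum => k; apply: measurable_funM.
Qed.

End PartialSums.

Section Modulus.
Context {R : realType}.
Implicit Types z a c e p : R[i].

Lemma cmodE z : cmod z = Normc.normc z. Proof. by case: z. Qed.

Lemma cmod_ge0 z : 0 <= cmod z. Proof. exact: sqrtr_ge0. Qed.

Lemma cmod0 : cmod (0 : R[i]) = 0.
Proof. by rewrite /cmod /= expr0n /= addr0 sqrtr0. Qed.

Lemma cmodD z1 z2 : cmod (z1 + z2) <= cmod z1 + cmod z2.
Proof. by rewrite !cmodE; apply: le_normcD. Qed.

Lemma cmodM z1 z2 : cmod (z1 * z2) = cmod z1 * cmod z2.
Proof. by rewrite !cmodE; apply: Normc.normcM. Qed.

Lemma cmod_subMr_le a c e p : cmod c <= 2 ->
  cmod (a - c * p) <= cmod (a - c * e) + 2 * cmod (e - p).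
Proof.
move=> c_le2; have -> : a - c * p = (a - c * e) + c * (e - p) by ring.
by apply: le_trans (cmodD _ _) _; rewrite lerD2l cmodM ler_wpM2r ?cmod_ge0.
Qed.

End Modulus.

Section CharacteristicFunction.
Context {R : realType} {dT : measure_display} {T : measurableType dT}.
Variable P : probability T R.

Lemma abs_fine_integral_le1 (f : R -> R) (Y : T -> R) :
  continuous f -> (forall x, `|f x| <= 1) -> measurable_fun setT Y ->
  `|fine (\int[P]_w (f (Y w))%:E)| <= 1.
Proof.
move=> f_cont f_le1 mY.
have mfY : measurable_fun [set: T] (EFin \o (f \o Y)).
  by apply/measurable_EFinP/measurableT_comp => //; apply: continuous_measurable_fun.
have int_le1 : (\int[P]_w `|(f (Y w))%:E| <= 1)%E.
  apply: le_trans (integral_le_bound (mu := P) _ measurableT mfY lee01 _) _.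
    by apply: aeW => x _ /=; rewrite lee_fin.
  by rewrite mul1e probability_le1.
move: (le_trans (le_abse_integral P measurableT mfY) int_le1).
by case: (\int[P]_w _)%E => [r||] //=; rewrite ?lee_fin // normr0 ler01.
Qed.

(* The sharp bound 1 would need Jensen's inequality; any constant will do. *)
Lemma cmod_charE_le2 (Y : T -> R) : measurable_fun setT Y -> cmod (charE P Y) <= 2.
Proof.
move=> mY; rewrite /cmod /charE /=.
have cos_le1 := abs_fine_integral_le1 _ _ (@continuous_cos R) (@cos_max R) mY.
have sin_le1 := abs_fine_integral_le1 _ _ (@continuous_sin R) (@sin_max R) mY.
have -> : 2 = Num.sqrt (2 ^+ 2) :> R by rewrite sqrtr_sqr ger0_norm.
rewrite ler_sqrt ?exprn_ge0 //.
by move: cos_le1 sin_le1; rewrite !ler_norml => /andP[? ?] /andP[? ?]; nra.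
Qed.

Lemma charE0 : charE P (fun=> 0) = 1.
Proof.
by rewrite /charE cos0 sin0 integral0 integral_cst //= probability_setT mul1e.
Qed.

Definition char_defect {N : nat} (a : 'I_N -> T -> R) : R :=
  cmod (charE P (fun w => \sum_(j < N) a j w) - \prod_(j < N) charE P (a j)).

Lemma char_defect_ord0 (a : 'I_0 -> T -> R) : char_defect a = 0.
Proof.
rewrite /char_defect big_ord0 (_ : (fun w => _) = fun=> 0) ?charE0 ?subrr ?cmod0 //.
by apply: funext => w; rewrite big_ord0.
Qed.

Lemma char_defect_recl N (a : 'I_N.+1 -> T -> R) (b : 'I_2 -> T -> R) :
  measurable_fun setT (a ord0) -> b ord0 = a ord0 ->
  (forall w, b (lift ord0 ord0) w = \sum_(j < N) a (lift ord0 j) w) ->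
  char_defect a <= char_defect b + 2 * char_defect (fun j => a (lift ord0 j)).
Proof.
move=> ma0 b0 b1; rewrite /char_defect big_ord_recl big_ord_recl big_ord1 b0.
have -> : (fun w => \sum_(j < N.+1) a j w) = fun w => \sum_(j < 2) b j w.
  by apply: funext => w; rewrite big_ord_recl [RHS]big_ord_recl big_ord1 b0 b1.
rewrite (funext b1); apply: cmod_subMr_le; exact: cmod_charE_le2.
Qed.

End CharacteristicFunction.

Lemma asym_indepE {R : realType} {dT : measure_display} {T : measurableType dT}
  (P : probability T R) N (X : 'I_N -> nat -> T -> R) :
  asym_indep P X <->
  forall xi : 'I_N -> R, (fun n => char_defect P (fun j w => xi j * X j n w)) @ \oo --> 0.
Proof. by []. Qed.

Section PairwiseToJoint.
Context {R : realType} {dT : measure_display} {T : measurableType dT}.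
Context {P : probability T R}.
Context {d : nat} (zeta : 'rV[int]_d -> {RV P >-> R}) (delta : R).
Hypothesis pairwise : forall psi1 psi2 : 'rV[R]_d -> R, inU psi1 -> inU psi2 ->
  (delta%:E <= sep (supp psi1) (supp psi2))%E ->
  asym_indep P (fun (j : 'I_2) n =>
    if val j == 0%N then Sn zeta n psi1 else Sn zeta n psi2).

Lemma asym_indep_of_pairwise N (phi : 'I_N -> 'rV[R]_d -> R) :
  (forall j, inU (phi j)) ->
  (forall i j, i != j -> (delta%:E <= sep (supp (phi i)) (supp (phi j)))%E) ->
  asym_indep P (fun j n => Sn zeta n (phi j)).
Proof.
elim: N phi => [|N IH] phi phiU phi_sep; apply/asym_indepE => xi.
  rewrite (_ : (fun n => _) = fun=> 0); first exact: cvg_cst.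
  by apply: funext => n; apply: char_defect_ord0.
pose phi' (j : 'I_N) := phi (lift ord0 j); pose xi' (j : 'I_N) := xi (lift ord0 j).
pose psi := lincomb xi' phi'.
have psi_sep : (delta%:E <= sep (supp (phi ord0)) (supp psi))%E.
  by apply: sep_lincomb => j; apply: phi_sep; apply: neq_lift.
have /asym_indepE pair_cvg :=
  pairwise _ _ (phiU ord0) (inU_lincomb _ xi' phi' (fun j => phiU _)) psi_sep.
have /asym_indepE tail_cvg : asym_indep P (fun j n => Sn zeta n (phi' j)).
  apply: IH => [j | i j ij]; first exact: phiU.
  by apply: phi_sep; rewrite (inj_eq lift_inj).
have := cvgD (pair_cvg (fun j => if val j == 0%N then xi ord0 else 1))
  (cvgMl_tmp (a := 2) (tail_cvg xi')).
rewrite mulr0 addr0 => bound_cvg.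
apply: (squeeze_cvgr (f := fun=> 0)); last 2 first.
- exact: cvg_cst.
- exact: bound_cvg.
exists 1%N => // n /= n_gt0; apply/andP; split; first exact: cmod_ge0.
have finU (f : 'rV[R]_d -> R) : inU f -> finite_set (grid_support n f).
  exact: finite_grid_support_inU.
rewrite addrfctE /=; apply: char_defect_recl => [|//|w /=].
  by apply: measurable_funM => //; apply/measurable_Sn/finU.
by rewrite mul1r (Sn_lincomb zeta n _ xi' phi' (fun j => finU _ (phiU _))).
Qed.

End PairwiseToJoint.

Theorem lemma2p6 (R : realType) (dT : measure_display) (T : measurableType dT)
  (P : probability T R) (d : nat) (zeta : 'rV[int]_d -> {RV P >-> R}) (delta : R) :
  (1 <= d)%N ->
  stationary zeta ->
  P.-integrable setT (EFin \o zeta (0%R : 'rV[int]_d)) ->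
  ('E_P[zeta (0%R : 'rV[int]_d)] = 0)%E ->
  P.-integrable setT (EFin \o (fun w => zeta (0%R : 'rV[int]_d) w ^+ 2)) ->
  0 < delta ->
  (forall psi1 psi2 : 'rV[R]_d -> R, inU psi1 -> inU psi2 ->
     (delta%:E <= sep (supp psi1) (supp psi2))%E ->
     asym_indep P (fun (j : 'I_2) n => if val j == 0%N then Sn zeta n psi1
                                       else Sn zeta n psi2)) ->
  forall (N : nat) (phi : 'I_N -> ('rV[R]_d -> R)),
    (2 <= N)%N ->
    (forall j, inU (phi j)) ->
    (forall i j : 'I_N, i != j -> (delta%:E <= sep (supp (phi i)) (supp (phi j)))%E) ->
    asym_indep P (fun j n => Sn zeta n (phi j)).
Proof.
move=> _ _ _ _ _ _ pairwise N phi _.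
exact: asym_indep_of_pairwise pairwise N phi.
Qed.
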